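(* Let $\mathcal{B}$ be a building set on $[d]$ that is $\triangle$-closed, i.e. for all $I,J\in\mathcal{B}$ with $I\not\subseteq J$, $J\not\subseteq I$ and $I\cap J\neq\emptyset$ one has $I\triangle J\in\mathcal{B}$. Then the nestohedron $\Delta_{\mathcal{B}}$ is inscribed.
   Context: A building set is a collection $\mathcal{B}$ of subsets of $[d]$ such that $I\cap J\neq\emptyset$ implies $I\cup J\in\mathcal{B}$ for all $I,J\in\mathcal{B}$. $I\triangle J=(I\setminus J)\cup(J\setminus I)$. For $I\subseteq[d]$, $\Delta_I=\mathrm{conv}(e_i:i\in I)$ and $\Delta_{\mathcal{B}}=\sum_{I\in\mathcal{B}}\Delta_I$ (Minkowski sum). A polytope is inscribed if all its vertices lie on a common sphere. *)

From HB Require Import structures.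
From mathcomp Require Import all_boot all_order all_algebra.
From mathcomp Require Import reals.
Set Implicit Arguments. Unset Strict Implicit. Unset Printing Implicit Defensive.
Import Order.TTheory GRing.Theory Num.Theory.
Local Open Scope ring_scope.

(* Points of R^d are row vectors 'rV[R]_d; [d] is 'I_d (0-indexed). *)

Definition conv (R : numDomainType) (d : nat) (T : finType) (f : T -> 'rV[R]_d)
  (A : {set T}) (x : 'rV[R]_d) : Prop :=
  exists lam : T -> R,
    (forall i, i \in A -> 0 <= lam i) /\
    \sum_(i in A) lam i = 1 /\
    x = \sum_(i in A) lam i *: f i.

Definition ebasis (R : numDomainType) (d : nat) (i : 'I_d) : 'rV[R]_d :=
  delta_mx 0 i.

Definition simplexI (R : numDomainType) (d : nat) (I : {set 'I_d}) : 'rV[R]_d -> Prop :=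
  conv (@ebasis R d) I.

Definition minkowski_sum (R : numDomainType) (d : nat) (B : {set {set 'I_d}})
  (F : {set 'I_d} -> 'rV[R]_d -> Prop) (x : 'rV[R]_d) : Prop :=
  exists p : {set 'I_d} -> 'rV[R]_d,
    (forall I, I \in B -> F I (p I)) /\ x = \sum_(I in B) p I.

Definition nestohedron (R : numDomainType) (d : nat) (B : {set {set 'I_d}}) :
  'rV[R]_d -> Prop := minkowski_sum B (@simplexI R d).

Definition dotv (R : numDomainType) (d : nat) (c x : 'rV[R]_d) : R :=
  \sum_i c 0 i * x 0 i.

Definition is_vertex (R : numDomainType) (d : nat) (P : 'rV[R]_d -> Prop)
  (v : 'rV[R]_d) : Prop :=
  P v /\ exists c : 'rV[R]_d, forall x, P x -> x <> v -> dotv c x < dotv c v.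

Definition inscribed (R : numDomainType) (d : nat) (P : 'rV[R]_d -> Prop) : Prop :=
  exists (c : 'rV[R]_d) (r : R), forall v, is_vertex P v ->
    \sum_i (v 0 i - c 0 i) ^+ 2 = r ^+ 2.

Definition building_set (d : nat) (B : {set {set 'I_d}}) : Prop :=
  forall I J, I \in B -> J \in B -> I :&: J != set0 -> I :|: J \in B.

Definition symdiff (d : nat) (I J : {set 'I_d}) : {set 'I_d} :=
  (I :\: J) :|: (J :\: I).

Definition triangle_closed (d : nat) (B : {set {set 'I_d}}) : Prop :=
  forall I J, I \in B -> J \in B -> ~~ (I \subset J) -> ~~ (J \subset I) ->
    I :&: J != set0 -> symdiff I J \in B.

From mathcomp Require Import all_boot all_order all_algebra.
From mathcomp Require Import reals.
From mathcomp Require Import ring.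
Set Implicit Arguments. Unset Strict Implicit. Unset Printing Implicit Defensive.
Import Order.TTheory GRing.Theory Num.Theory.
Local Open Scope ring_scope.

(* Maximizing a linear functional c over the nestohedron gives the vertex
   v = \sum_(I in B) e_(m I), where m I is the c-largest element of I (ties
   broken by index).  With centre a = \sum_(I in B) 1_I, expanding gives
     |v - a|^2 = \sum_(I, J in B) (#|I :&: J| + cross I J),
     cross I J = [m I = m J] - [m I \in J] - [m J \in I].
   cross is -1 on nested pairs and 0 on disjoint ones.  On overlapping
   incomparable pairs, (I, J) |-> (J, symdiff I J) has order 3 and preserves
   such pairs by triangle-closedness; cross sums to -2 along each orbit,
   because the c-largest element of I :|: J (which is in B) lies in exactly
   two of I, J, symdiff I J and is selected by both.  Hence |v - a|^2 does
   not depend on c. *)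

Lemma in_symdiff d (I J : {set 'I_d}) k : (k \in symdiff I J) = (k \in I) (+) (k \in J).
Proof. by rewrite /symdiff !inE; case: (k \in I); case: (k \in J). Qed.

Lemma symdiffKl d (I J : {set 'I_d}) : symdiff (symdiff I J) I = J.
Proof. by apply/setP => k; rewrite !in_symdiff addbC addbA addbb. Qed.

Lemma symdiffKr d (I J : {set 'I_d}) : symdiff J (symdiff I J) = I.
Proof. by apply/setP => k; rewrite !in_symdiff addbC -addbA addbb addbF. Qed.

Section OverlapRotation.
Variables (d : nat) (B : {set {set 'I_d}}).

Definition nested_pair : pred ({set 'I_d} * {set 'I_d}) := fun p =>
  [&& p.1 \in B, p.2 \in B & (p.1 \subset p.2) || (p.2 \subset p.1)].

Definition overlap_pair : pred ({set 'I_d} * {set 'I_d}) := fun p =>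
  [&& p.1 \in B, p.2 \in B, ~~ (p.1 \subset p.2), ~~ (p.2 \subset p.1)
    & p.1 :&: p.2 != set0].

Definition rotate (p : {set 'I_d} * {set 'I_d}) := (p.2, symdiff p.1 p.2).

Lemma rotateK3 p : rotate (rotate (rotate p)) = p.
Proof. by case: p => I J; rewrite /rotate /= symdiffKr symdiffKl. Qed.

Lemma rotate_inj : injective rotate.
Proof. by move=> p q eq_pq; rewrite -(rotateK3 p) -(rotateK3 q) eq_pq. Qed.

Hypothesis B_triangle : triangle_closed B.

Lemma overlap_rotate p : overlap_pair p -> overlap_pair (rotate p).
Proof.
case: p => I J /and5P [IB JB nIJ nJI IJ0].
have /set0Pn [x /setIP [xI xJ]] := IJ0.
apply/and5P; split => //=.
- exact: B_triangle.
- by apply/subsetPn; exists x; rewrite // in_symdiff xI xJ.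
- case/subsetPn: nIJ => y yI yJ; apply/subsetPn; exists y => //.
  by rewrite in_symdiff yI (negbTE yJ).
- case/subsetPn: nJI => y yJ yI; apply/set0Pn; exists y.
  by rewrite inE yJ in_symdiff (negbTE yI).
Qed.

Lemma overlap_rotateE p : overlap_pair (rotate p) = overlap_pair p.
Proof.
apply/idP/idP => [|/overlap_rotate //].
by rewrite -{2}(rotateK3 p) => /overlap_rotate/overlap_rotate.
Qed.

Lemma sum_overlap_rotate (V : nmodType) (F : {set 'I_d} * {set 'I_d} -> V) :
  \sum_(p | overlap_pair p) F (rotate p) = \sum_(p | overlap_pair p) F p.
Proof.
by rewrite [RHS](reindex_inj rotate_inj); apply: eq_bigl => p; rewrite overlap_rotateE.
Qed.

End OverlapRotation.

Lemma sum_delta (R : pzSemiRingType) (T : finType) (a : T) (f : T -> R) :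
  \sum_k (a == k)%:R * f k = f a.
Proof.
rewrite (bigD1 a) //= eqxx mul1r big1 ?addr0 // => k.
by rewrite eq_sym => /negbTE ->; rewrite mul0r.
Qed.

Lemma sum_indicator (R : pzSemiRingType) (T : finType) (A : {set T}) :
  \sum_k (k \in A)%:R = #|A|%:R :> R.
Proof.
by rewrite -sumr_const [RHS]big_mkcond; apply: eq_bigr => k _; case: (k \in A).
Qed.

Section CompatibleSelector.
Variables (R : numFieldType) (d : nat) (B : {set {set 'I_d}}).
Variable m : {set 'I_d} -> 'I_d.

Definition cross (I J : {set 'I_d}) : R :=
  (m I == m J)%:R - (m I \in J)%:R - (m J \in I)%:R.

Lemma cross_dot I J :
  \sum_k (((m I == k)%:R - (k \in I)%:R) * ((m J == k)%:R - (k \in J)%:R))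
  = #|I :&: J|%:R + cross I J.
Proof.
have meet_card : \sum_k (k \in I)%:R * (k \in J)%:R = #|I :&: J|%:R :> R.
  rewrite -sum_indicator; apply: eq_bigr => k _; rewrite inE.
  by case: (k \in I); rewrite ?mul1r ?mul0r.
under eq_bigr do rewrite mulrBl !mulrBr.
rewrite !sumrB !sum_delta meet_card.
under eq_bigr do rewrite mulrC.
by rewrite sum_delta /cross eq_sym; ring.
Qed.

Hypothesis m_mem : forall I, I \in B -> m I \in I.
Hypothesis m_sub :
  forall I U, I \in B -> U \in B -> I \subset U -> m U \in I -> m I = m U.

Lemma crossC I J : cross I J = cross J I.
Proof. by rewrite /cross eq_sym; ring. Qed.

Lemma cross_nested I J : I \in B -> J \in B -> I \subset J -> cross I J = -1.
Proof.
move=> IB JB sIJ; rewrite /cross (subsetP sIJ _ (m_mem IB)).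
have [mJI|mJnI] := boolP (m J \in I).
  by rewrite (m_sub IB JB sIJ mJI) eqxx /=; ring.
have -> : (m I == m J) = false by apply: contraNF mJnI => /eqP <-; apply: m_mem.
by rewrite /=; ring.
Qed.

Lemma cross_disjoint I J : I \in B -> J \in B -> I :&: J = set0 -> cross I J = 0.
Proof.
move=> IB JB IJ0.
have notin K L : K \in B -> K :&: L = set0 -> m K \in L = false.
  move=> KB KL0; apply/negbTE/negP => mKL.
  by move: (in_set0 (m K)); rewrite -KL0 inE m_mem // mKL.
have mIJ : m I \in J = false by apply: notin.
have mJI : m J \in I = false by apply: notin; rewrite // setIC.
rewrite /cross mIJ mJI.
have -> : (m I == m J) = false by apply: contraFF mIJ => /eqP ->; apply: m_mem.
by rewrite /=; ring.
Qed.

Lemma cross_triangle X Y Z : X \in B -> Y \in B -> Z \in B ->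
  Z = symdiff X Y -> m X = m Y -> cross X Y + cross Y Z + cross Z X = -2.
Proof.
move=> XB YB ZB defZ mXY.
have mYX : m Y \in X by rewrite -mXY m_mem.
have mYZ : m Y \in Z = false by rewrite defZ in_symdiff mYX m_mem.
have mZXY : (m Z \in X) (+) (m Z \in Y) by rewrite -in_symdiff -defZ m_mem.
rewrite /cross mXY eqxx (m_mem YB) mYX mYZ [m Z == _]eq_sym.
have -> : (m Y == m Z) = false by apply: contraFF mYZ => /eqP ->; apply: m_mem.
by move: mZXY; case: (m Z \in X); case: (m Z \in Y) => //= _; ring.
Qed.

Hypotheses (B_building : building_set B) (B_triangle : triangle_closed B).

Lemma cross_rotate_orbit p : overlap_pair B p ->
  cross p.1 p.2 + cross (rotate p).1 (rotate p).2
  + cross (rotate (rotate p)).1 (rotate (rotate p)).2 = -2.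
Proof.
case: p => I J /and5P [IB JB nIJ nJI IJ0]; rewrite /rotate /= symdiffKr.
set K := symdiff I J; set U := I :|: J.
have KB : K \in B by apply: B_triangle.
have UB : U \in B by apply: B_building.
have mU X : X \in B -> X \subset U -> m U \in X -> m X = m U.
  by move=> XB; apply: m_sub.
have sIU : I \subset U := subsetUl I J.
have sJU : J \subset U := subsetUr I J.
have sKU : K \subset U.
  by apply/subsetP => k; rewrite in_symdiff inE; case: (k \in I); case: (k \in J).
have mUK : m U \in K = (m U \in I) (+) (m U \in J) by rewrite in_symdiff.
have := m_mem UB; rewrite inE.
case mUI: (m U \in I); case mUJ: (m U \in J) => // _.
- apply: cross_triangle => //.
  by rewrite (mU I) ?(mU J).
- rewrite addrC addrA; apply: cross_triangle => //; first by rewrite /K symdiffKl.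
  by rewrite (mU K) ?(mU I) // mUK mUI mUJ.
- rewrite -addrA addrC; apply: cross_triangle => //; first by rewrite /K symdiffKr.
  by rewrite (mU J) ?(mU K) // mUK mUI mUJ.
Qed.

Lemma sum_cross_overlap :
  \sum_(p | overlap_pair B p) cross p.1 p.2 = - (#|overlap_pair B|%:R * 2 / 3).
Proof.
pose F p := cross p.1 p.2.
have orbit_sum : (\sum_(p | overlap_pair B p) F p) *+ 3 = -2 *+ #|overlap_pair B|.
  have rot1 := sum_overlap_rotate B_triangle F.
  have rot2 := sum_overlap_rotate B_triangle (fun p => F (rotate p)).
  rewrite rot1 in rot2.
  rewrite mulrS mulr2n -{2}rot1 -{2}rot2 addrA -!big_split /=.
  rewrite (eq_bigr (fun=> -2)) => [|p]; last exact: cross_rotate_orbit.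
  by rewrite sumr_const.
have three_neq0 : (3 : R) != 0 by rewrite pnatr_eq0.
by rewrite -mulNr -mulrN mulr_natl -orbit_sum -[_ *+ 3]mulr_natr mulfK.
Qed.

Lemma sum_cross :
  \sum_(I in B) \sum_(J in B) cross I J
  = - #|nested_pair B|%:R - #|overlap_pair B|%:R * 2 / 3.
Proof.
rewrite pair_big /= (bigID (nested_pair B)) [X in _ + X = _](bigID (overlap_pair B)) /=.
congr (_ + _).
  rewrite (eq_bigl (nested_pair B)) => [|p]; last first.
    by rewrite andb_idl // => /and3P [-> ->].
  rewrite (eq_bigr (fun=> -1)) => [|[I J] /and3P [/= IB JB /orP [sIJ|sJI]]].
  - by rewrite sumr_const mulNrn.
  - exact: cross_nested.
  - by rewrite crossC; apply: cross_nested.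
rewrite -sum_cross_overlap [X in _ + X]big1 ?addr0.
  apply: eq_bigl => p; rewrite andb_idl // => /and5P [IB JB nIJ nJI _].
  by rewrite IB JB /nested_pair IB JB negb_or nIJ nJI.
move=> [I J] /andP [/andP [/andP [/= IB JB] not_nested] not_overlap].
apply: cross_disjoint => //; apply/eqP; apply: contraNT not_overlap => IJ0.
move: not_nested; rewrite /nested_pair /overlap_pair /= IB JB negb_or.
by case/andP => -> ->.
Qed.

Definition sqr_radius : R := \sum_(I in B) \sum_(J in B) #|I :&: J|%:R
  - #|nested_pair B|%:R - #|overlap_pair B|%:R * 2 / 3.

Lemma sum_sqr_selector :
  \sum_k (\sum_(I in B) (m I == k)%:R - \sum_(I in B) (k \in I)%:R) ^+ 2 = sqr_radius.
Proof.
have expand (k : 'I_d) : (\sum_(I in B) (m I == k)%:R - \sum_(I in B) (k \in I)%:R) ^+ 2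
    = \sum_(I in B) \sum_(J in B)
        ((m I == k)%:R - (k \in I)%:R) * ((m J == k)%:R - (k \in J)%:R) :> R.
  by rewrite -sumrB expr2 mulr_suml; apply: eq_bigr => I _; rewrite mulr_sumr.
rewrite (eq_bigr _ (fun k _ => expand k)) exchange_big /=.
rewrite /sqr_radius -addrA -sum_cross -big_split /=; apply: eq_bigr => I _.
by rewrite exchange_big -big_split /=; apply: eq_bigr => J _; apply: cross_dot.
Qed.

End CompatibleSelector.

Section LinearFunctionals.
Variables (R : numDomainType) (d : nat).
Implicit Types (c x : 'rV[R]_d) (I : {set 'I_d}).

Lemma dotv_sumr (T : finType) (P : pred T) (F : T -> 'rV[R]_d) c :
  dotv c (\sum_(t | P t) F t) = \sum_(t | P t) dotv c (F t).
Proof.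
rewrite /dotv; under eq_bigr do rewrite summxE mulr_sumr.
exact: exchange_big.
Qed.

Lemma dotvZr c a x : dotv c (a *: x) = a * dotv c x.
Proof.
by rewrite /dotv mulr_sumr; apply: eq_bigr => i _; rewrite mxE mulrCA.
Qed.

Lemma ebasisE (i k : 'I_d) : @ebasis R d i 0 k = (i == k)%:R.
Proof. by rewrite /ebasis mxE eqxx eq_sym. Qed.

Lemma dotv_ebasis c i : dotv c (@ebasis R d i) = c 0 i.
Proof.
by rewrite /dotv; under eq_bigr do rewrite ebasisE mulrC; rewrite sum_delta.
Qed.

Lemma simplexI_ebasis I i : i \in I -> simplexI I (@ebasis R d i).
Proof.
move=> iI; exists (fun j => (i == j)%:R); split; first by move=> j _; apply: ler0n.
have others (j : 'I_d) : j \in I -> j != i -> (i == j)%:R = 0 :> R.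
  by move=> _ ji; rewrite eq_sym (negbTE ji).
split; rewrite (bigD1 i) //= eqxx.
  by rewrite big1 ?addr0 // => j /andP [jI ji]; rewrite others.
by rewrite scale1r big1 ?addr0 // => j /andP [jI ji]; rewrite others // scale0r.
Qed.

Lemma simplexI_dotv_le I x c (M : R) :
  simplexI I x -> (forall i, i \in I -> c 0 i <= M) -> dotv c x <= M.
Proof.
move=> [lam [lam_ge0 [lam_sum1 ->]]] le_cM.
rewrite dotv_sumr -[M]mul1r -lam_sum1 mulr_suml; apply: ler_sum => i iI.
by rewrite dotvZr dotv_ebasis ler_wpM2l ?lam_ge0 ?le_cM.
Qed.

Lemma nestohedron_set0 (B : {set {set 'I_d}}) x : set0 \in B -> ~ nestohedron B x.
Proof.
move=> B0 [p [p_simplex _]]; have [lam [_ [+ _]]] := p_simplex _ B0.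
by rewrite big_set0 => /eqP; rewrite eq_sym oner_eq0.
Qed.

End LinearFunctionals.

Section GreedyVertex.
Variables (R : realDomainType) (d : nat) (c : 'rV[R]_d) (i0 : 'I_d).
Implicit Types (I U : {set 'I_d}) (B : {set {set 'I_d}}).

(* Breaking ties by index makes the maximizer consistent on nested sets,
   see [cmax_sub]. *)
Definition ckey (i : 'I_d) : (R *l nat)%type := (c 0 i, val i).

Lemma ckey_inj : injective ckey.
Proof. by move=> i j [_ /val_inj]. Qed.

Definition cmax (I : {set 'I_d}) : 'I_d :=
  if [pick i in I] is Some i then [arg max_(j > i in I) ckey j]%O else i0.

Lemma cmaxP I : I != set0 ->
  cmax I \in I /\ forall j, j \in I -> (ckey j <= ckey (cmax I))%O.
Proof.
case/set0Pn => x xI; rewrite /cmax; case: pickP => [i iI|/(_ x)]; last by rewrite xI.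
by case: arg_maxP.
Qed.

Lemma cmax_mem I : I != set0 -> cmax I \in I.
Proof. by case/cmaxP. Qed.

Lemma cmax_max I j : j \in I -> c 0 j <= c 0 (cmax I).
Proof.
move=> jI; have I0 : I != set0 by apply/set0Pn; exists j.
by have [_ /(_ j jI)] := cmaxP I0; rewrite /ckey lexi_pair => /andP [].
Qed.

Lemma cmax_sub I U : I \subset U -> cmax U \in I -> cmax I = cmax U.
Proof.
move=> sIU cUI; have I0 : I != set0 by apply/set0Pn; exists (cmax U).
have U0 : U != set0 by apply/set0Pn; exists (cmax U); apply: (subsetP sIU).
have [cII maxI] := cmaxP I0; have [_ maxU] := cmaxP U0.
by apply: ckey_inj; apply/eqP; rewrite eq_le maxI // maxU // (subsetP sIU).
Qed.

Definition greedy B : 'rV[R]_d := \sum_(I in B) @ebasis R d (cmax I).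

Lemma greedyE B k : greedy B 0 k = \sum_(I in B) (cmax I == k)%:R.
Proof. by rewrite summxE; apply: eq_bigr => I _; rewrite ebasisE. Qed.

Lemma greedy_mem B : set0 \notin B -> nestohedron B (greedy B).
Proof.
move=> B0; exists (fun I => @ebasis R d (cmax I)); split => // I IB.
by apply/simplexI_ebasis/cmax_mem; apply: contraNneq B0 => <-.
Qed.

Lemma greedy_max B x : nestohedron B x -> dotv c x <= dotv c (greedy B).
Proof.
move=> [p [p_simplex ->]]; rewrite !dotv_sumr; apply: ler_sum => I IB.
rewrite dotv_ebasis; apply: simplexI_dotv_le (p_simplex I IB) _ => j.
exact: cmax_max.
Qed.

End GreedyVertex.

Lemma vertex_greedy (R : realDomainType) d (i0 : 'I_d) (B : {set {set 'I_d}}) v :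
  set0 \notin B -> is_vertex (@nestohedron R d B) v -> exists c, v = greedy c i0 B.
Proof.
move=> B0 [Pv [c v_max]]; exists c.
case: (eqVneq (greedy c i0 B) v) => [<- //|/eqP g_ne_v].
have := v_max _ (greedy_mem c i0 B0) g_ne_v.
by rewrite ltNge greedy_max.
Qed.

Theorem proposition4p22 (R : realType) (d : nat) (B : {set {set 'I_d}}) :
  building_set B -> triangle_closed B -> inscribed (@nestohedron R d B).
Proof.
move=> B_building B_triangle.
have [B0|B0] := boolP (set0 \in B).
  by exists 0, 0 => v [/(nestohedron_set0 B0)].
case: d B B_building B_triangle B0 => [|d] B B_building B_triangle B0.
  by exists 0, 0 => v _; rewrite big_ord0 expr0n.
exists (\row_k \sum_(I in B) (k \in I)%:R), (Num.sqrt (sqr_radius R B)).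
move=> v /(vertex_greedy ord0 B0) [c ->].
have nonempty I : I \in B -> I != set0 by move=> IB; apply: contraNneq B0 => <-.
have sum_sqr := sum_sqr_selector R (m := cmax c ord0)
  (fun I IB => @cmax_mem _ _ c ord0 I (nonempty I IB))
  (fun I U _ _ => @cmax_sub _ _ c ord0 I U)
  B_building B_triangle.
under eq_bigr do rewrite greedyE mxE.
rewrite sum_sqr sqr_sqrtr // -sum_sqr.
by apply: sumr_ge0 => k _; apply: sqr_ge0.
Qed.
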